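(* Let $\rho\in(0,\infty)$ and $d=d(L)$ with $dL\to\theta\in[0,\infty)$. For every $H\in\mathcal D(\mathcal L_\theta)$, $$\lim_{N/L\to\rho}\ \sup_{\eta\in\Omega_{L,N}}\Big|\mathfrak L_{L,N}\big(H\circ\mu_{L,N}^{(\cdot)}\big)(\eta)-(\mathcal L_\theta H)(\mu_{L,N}^{(\eta)})\Big|=0.$$
   Context: Inclusion process: $\Omega_{L,N}=\{\eta\in\mathbb N_0^L:\sum_x\eta_x=N\}$, $\mathfrak L_{L,N}f(\eta)=\sum_{x\ne y}\eta_x(d+\eta_y)[f(\eta^{x,y})-f(\eta)]$, $\eta^{x,y}=\eta-e^x+e^y$; ''$N/L\to\rho$'' means $N,L\to\infty$ with $N/L\to\rho$. $\mu^{(\eta)}_{L,N}=\sum_x\frac{\eta_x}N\delta_{\eta_x/N}$. $\overline\nabla=\{p\in[0,1]^{\mathbb N}:p_1\ge p_2\ge\dots,\sum p_i\le1\}$, $\mu^{(p)}=(1-\|p\|_1)\delta_0+\sum_ip_i\delta_{p_i}$, $E=\{\mu^{(p)}:p\in\overline\nabla\}$ (note $\mu^{(\eta)}_{L,N}\in E$). $Bh=(zh)'$; $A_\theta h(z)=z(1-z)h''+(2-(2+\theta)z)h'+\theta(h(0)-h(z))$; $\mathcal D(\mathcal L_\theta)$ = subalgebra of $C(E)$ generated by $\mu\mapsto\mu(h)$, $h\in C^3([0,1])$, with $\mathcal L_\theta\prod_{k=1}^n\mu(h_k)=2\sum_{k<l}(\mu(Bh_kBh_l)-\mu(Bh_k)\mu(Bh_l))\prod_{j\ne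 k,l}\mu(h_j)+\sum_k\mu(A_\theta h_k)\prod_{j\ne k}\mu(h_j)$, extended linearly. *)

From Stdlib Require Import Reals Lra Lia List.
From Coquelicot Require Import Coquelicot.
Open Scope R_scope.

Fixpoint rsum (n : nat) (f : nat -> R) : R :=
  match n with O => 0 | S m => rsum m f + f m end.
Fixpoint rprod (n : nat) (f : nat -> R) : R :=
  match n with O => 1 | S m => rprod m f * f m end.
Fixpoint nsum (n : nat) (f : nat -> nat) : nat :=
  match n with O => 0%nat | S m => (nsum m f + f m)%nat end.

(* h in C^3([0,1]): represented by a C^3 function on R (every C^3([0,1])
   function extends to a C^3 function on R, and only values on [0,1] matter). *)
Definition C3 (h : R -> R) : Prop :=
  (forall (k : nat) (x : R), (k <= 3)%nat -> ex_derive_n h k x) /\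
  (forall x : R, continuous (Derive_n h 3) x).

Definition Bop (h : R -> R) : R -> R := fun z => Derive (fun t => t * h t) z.

Definition Aop (theta : R) (h : R -> R) : R -> R := fun z =>
  z * (1 - z) * Derive_n h 2 z + (2 - (2 + theta) * z) * Derive h z
  + theta * (h 0 - h z).

(* An element of D(L_theta) given as a finite linear combination of finite
   products of the functionals mu |-> mu(h): list of (coefficient, factors). *)
Definition dpoly := list (R * list (R -> R)).

(* ev plays the role of a measure mu: ev g = mu(g). *)
Definition mon_eval (ev : (R -> R) -> R) (hs : list (R -> R)) : R :=
  fold_right (fun h acc => ev h * acc) 1 hs.

Definition H_eval (ev : (R -> R) -> R) (P : dpoly) : R :=
  fold_right (fun m acc => fst m * mon_eval ev (snd m) + acc) 0 P.

Definition hzero : R -> R := fun _ => 0.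

(* L_theta applied to prod_{k<n} mu(h_k), evaluated at mu *)
Definition Lmon (theta : R) (ev : (R -> R) -> R) (hs : list (R -> R)) : R :=
  let n := length hs in
  let h := fun k => nth k hs hzero in
  2 * rsum n (fun k => rsum n (fun l =>
        if (k <? l)%nat then
          (ev (fun z => Bop (h k) z * Bop (h l) z) - ev (Bop (h k)) * ev (Bop (h l)))
          * rprod n (fun j => if orb (j =? k)%nat (j =? l)%nat then 1 else ev (h j))
        else 0))
  + rsum n (fun k => ev (Aop theta (h k))
        * rprod n (fun j => if (j =? k)%nat then 1 else ev (h j))).

Definition LH (theta : R) (ev : (R -> R) -> R) (P : dpoly) : R :=
  fold_right (fun m acc => fst m * Lmon theta ev (snd m) + acc) 0 P.

(* Configurations: eta : nat -> nat, sites 0..L-1. *)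
Definition mu_eta (L N : nat) (eta : nat -> nat) (g : R -> R) : R :=
  rsum L (fun x => INR (eta x) / INR N * g (INR (eta x) / INR N)).

Definition jump (eta : nat -> nat) (x y : nat) : nat -> nat := fun z =>
  if (z =? x)%nat then (eta z - 1)%nat
  else if (z =? y)%nat then (eta z + 1)%nat else eta z.

(* Generator of the inclusion process applied to f at eta *)
Definition gen (L : nat) (d : R) (f : (nat -> nat) -> R) (eta : nat -> nat) : R :=
  rsum L (fun x => rsum L (fun y =>
    if (x =? y)%nat then 0
    else INR (eta x) * (d + INR (eta y)) * (f (jump eta x y) - f eta))).

From Stdlib Require Import Reals Lra Lia List.
From Coquelicot Require Import Coquelicot.
Open Scope R_scope.

(** Write a_x = eta_x / N for the masses of a configuration and e = 1 / N.
    A jump x -> y changes mu(h) by the increment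
      Delta h = e (Bh(a_y) - Bh(a_x)) + e^2 (Ch(a_x) + Ch(a_y)) + O(e^3),
    with Bh = (z h)' and Ch = (z h)'' / 2 (Taylor's formula for C^3 functions).
    Expanding a monomial prod_j mu(h_j) to second order in these increments
    and summing against the jump rates eta_x (d + eta_y), the first-order terms
    produce mu(A_theta h_j) and the second-order cross terms produce the carre du
    champ 2 (mu(Bh Bk) - mu(Bh) mu(Bk)); everything else is bounded by a
    constant times the error scale
      errq = |d L - theta| + d + (1 + d L) / N,
    which tends to 0 as N, L -> infinity with d L -> theta. *)

Lemma rsum_ext n f g : (forall i, (i < n)%nat -> f i = g i) -> rsum n f = rsum n g.
Proof.
  induction n as [|n IH]; simpl; intros H; auto.
  rewrite IH by (intros; apply H; lia). rewrite H by lia. reflexivity.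
Qed.

Lemma rsum_S n f : rsum (S n) f = rsum n f + f n.
Proof. reflexivity. Qed.

Lemma rsum_plus n f g : rsum n (fun i => f i + g i) = rsum n f + rsum n g.
Proof. induction n; simpl; [ring | rewrite IHn; ring]. Qed.

Lemma rsum_minus n f g : rsum n (fun i => f i - g i) = rsum n f - rsum n g.
Proof. induction n; simpl; [ring | rewrite IHn; ring]. Qed.

Lemma rsum_scal_l n c f : rsum n (fun i => c * f i) = c * rsum n f.
Proof. induction n; simpl; [ring | rewrite IHn; ring]. Qed.

Lemma rsum_scal_r n c f : rsum n (fun i => f i * c) = rsum n f * c.
Proof. induction n; simpl; [ring | rewrite IHn; ring]. Qed.

Lemma rsum_const n c : rsum n (fun _ => c) = INR n * c.
Proof. induction n; simpl rsum; [simpl; ring | rewrite IHn, S_INR; ring]. Qed.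

Lemma rsum_0 n : rsum n (fun _ => 0) = 0.
Proof. rewrite rsum_const; ring. Qed.

Lemma rsum_abs_le n f g :
  (forall i, (i < n)%nat -> Rabs (f i) <= g i) -> Rabs (rsum n f) <= rsum n g.
Proof.
  induction n as [|n IH]; simpl; intros H; [rewrite Rabs_R0; lra|].
  eapply Rle_trans; [apply Rabs_triang|].
  apply Rplus_le_compat; [apply IH; intros; apply H; lia | apply H; lia].
Qed.

Lemma rsum_abs_const n f c :
  (forall i, (i < n)%nat -> Rabs (f i) <= c) -> Rabs (rsum n f) <= INR n * c.
Proof. intros H. rewrite <- rsum_const. apply rsum_abs_le; auto. Qed.

Lemma rsum_delta n x c : (x < n)%nat -> rsum n (fun z => if (z =? x)%nat then c else 0) = c.
Proof.
  induction n as [|n IH]; intros Hx; [lia|]. simpl.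
  destruct (Nat.eqb_spec n x) as [->|Hne].
  - rewrite (rsum_ext x _ (fun _ => 0)), rsum_0; [ring|].
    intros i Hi. destruct (Nat.eqb_spec i x); [lia | auto].
  - rewrite IH by lia. ring.
Qed.

Definition dsum L (F : nat -> nat -> R) := rsum L (fun x => rsum L (fun y => F x y)).
Definition osum L (F : nat -> nat -> R) :=
  rsum L (fun x => rsum L (fun y => if (x =? y)%nat then 0 else F x y)).

Lemma dsum_ext L F G :
  (forall x y, (x < L)%nat -> (y < L)%nat -> F x y = G x y) -> dsum L F = dsum L G.
Proof. intros H. unfold dsum. apply rsum_ext; intros; apply rsum_ext; auto. Qed.

Lemma dsum_plus L F G : dsum L (fun x y => F x y + G x y) = dsum L F + dsum L G.
Proof. unfold dsum. rewrite <- rsum_plus. apply rsum_ext; intros. apply rsum_plus. Qed.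

Lemma dsum_sep L c f g : dsum L (fun x y => c * f x * g y) = c * rsum L f * rsum L g.
Proof.
  unfold dsum. rewrite (rsum_ext L _ (fun x => (c * f x) * rsum L g)).
  - rewrite rsum_scal_r, rsum_scal_l. ring.
  - intros. rewrite <- rsum_scal_l. apply rsum_ext; intros; ring.
Qed.

Lemma osum_ext L F G :
  (forall x y, (x < L)%nat -> (y < L)%nat -> x <> y -> F x y = G x y) -> osum L F = osum L G.
Proof.
  intros H. unfold osum. apply rsum_ext; intros; apply rsum_ext; intros.
  destruct (Nat.eqb_spec i i0); auto.
Qed.

Lemma osum_plus L F G : osum L (fun x y => F x y + G x y) = osum L F + osum L G.
Proof.
  unfold osum. rewrite <- rsum_plus. apply rsum_ext; intros. rewrite <- rsum_plus.
  apply rsum_ext; intros. destruct (_ =? _)%nat; ring.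
Qed.

Lemma osum_scal_r L F c : osum L (fun x y => F x y * c) = osum L F * c.
Proof.
  unfold osum. rewrite <- rsum_scal_r. apply rsum_ext; intros. rewrite <- rsum_scal_r.
  apply rsum_ext; intros. destruct (_ =? _)%nat; ring.
Qed.

Lemma osum_0 L : osum L (fun _ _ => 0) = 0.
Proof.
  unfold osum. rewrite (rsum_ext L _ (fun _ => 0)); [apply rsum_0|]. intros.
  rewrite (rsum_ext L _ (fun _ => 0)); [apply rsum_0|]. intros. destruct (_ =? _)%nat; ring.
Qed.

Lemma osum_rsum L n F :
  osum L (fun x y => rsum n (fun k => F k x y)) = rsum n (fun k => osum L (F k)).
Proof. induction n; simpl; [apply osum_0 | rewrite osum_plus, IHn; reflexivity]. Qed.

Lemma osum_diag L F : osum L F = dsum L F - rsum L (fun x => F x x).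
Proof.
  unfold osum, dsum. rewrite <- rsum_minus. apply rsum_ext; intros x Hx.
  rewrite <- (rsum_delta L x (F x x)), <- rsum_minus by auto. apply rsum_ext; intros y Hy.
  destruct (Nat.eqb_spec x y), (Nat.eqb_spec y x); subst; try lia; ring.
Qed.

Lemma osum_diag0 L F : (forall x, F x x = 0) -> osum L F = dsum L F.
Proof.
  intros H. rewrite osum_diag, (rsum_ext L _ (fun _ => 0)), rsum_0 by auto. ring.
Qed.

Lemma osum_weighted_bound L (w F : nat -> nat -> R) c :
  (forall x y, (x < L)%nat -> (y < L)%nat -> 0 <= w x y) ->
  (forall x y, (x < L)%nat -> (y < L)%nat -> Rabs (F x y) <= c) ->
  Rabs (osum L (fun x y => w x y * F x y)) <= c * dsum L w.
Proof.
  intros Hw HF. unfold osum, dsum. rewrite <- rsum_scal_l.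
  apply rsum_abs_le; intros x Hx. rewrite <- rsum_scal_l.
  apply rsum_abs_le; intros y Hy.
  assert (0 <= Rabs (F x y)) by apply Rabs_pos.
  specialize (HF x y Hx Hy). specialize (Hw x y Hx Hy).
  destruct (_ =? _)%nat.
  - rewrite Rabs_R0. nra.
  - rewrite Rabs_mult, Rabs_right by lra. nra.
Qed.

Lemma rprod_ext n f g : (forall i, (i < n)%nat -> f i = g i) -> rprod n f = rprod n g.
Proof.
  induction n as [|n IH]; simpl; intros H; auto.
  rewrite IH by (intros; apply H; lia). rewrite H by lia. reflexivity.
Qed.

Lemma rprod_abs_le n f M :
  0 <= M -> (forall j, (j < n)%nat -> Rabs (f j) <= M) -> Rabs (rprod n f) <= M ^ n.
Proof.
  induction n as [|n IH]; simpl; intros HM H; [rewrite Rabs_R1; lra|].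
  rewrite Rabs_mult, Rmult_comm.
  apply Rmult_le_compat; try apply Rabs_pos.
  - apply H; lia.
  - apply IH; [exact HM | intros; apply H; lia].
Qed.

(** Taylor bounds for C^3 test functions. *)

Lemma continuous_bounded (f : R -> R) : (forall t, -1 <= t <= 2 -> continuous f t) ->
  exists M, 0 <= M /\ forall t, -1 <= t <= 2 -> Rabs (f t) <= M.
Proof.
  intros Hc.
  assert (Hcabs : forall t, -1 <= t <= 2 -> continuity_pt (fun t => Rabs (f t)) t).
  { intros t Ht. apply (continuity_pt_comp f Rabs); [|apply Rcontinuity_abs].
    apply continuity_pt_filterlim, Hc, Ht. }
  destruct (continuity_ab_maj (fun t => Rabs (f t)) (-1) 2) as [tmax [Hmax _]]; [lra | exact Hcabs |].
  exists (Rabs (f tmax)). split; [apply Rabs_pos | auto].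
Qed.

Lemma C3_derivatives_bounded h : C3 h -> exists M, 0 <= M /\ forall t, -1 <= t <= 2 ->
  Rabs (h t) <= M /\ Rabs (Derive h t) <= M /\
  Rabs (Derive_n h 2 t) <= M /\ Rabs (Derive_n h 3 t) <= M.
Proof.
  intros [Hd Hc].
  assert (Hk : forall k, (k <= 2)%nat -> forall t, -1 <= t <= 2 -> continuous (Derive_n h k) t)
    by (intros k Hk t _; exact (ex_derive_continuous (Derive_n h k) t (Hd (S k) t ltac:(lia)))).
  destruct (continuous_bounded _ (Hk 0%nat ltac:(lia))) as [M0 [P0 H0]].
  destruct (continuous_bounded _ (Hk 1%nat ltac:(lia))) as [M1 [P1 H1]].
  destruct (continuous_bounded _ (Hk 2%nat ltac:(lia))) as [M2 [P2 H2]].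
  destruct (continuous_bounded (Derive_n h 3) (fun t _ => Hc t)) as [M3 [P3 H3]].
  exists (M0 + M1 + M2 + M3). split; [lra|]. intros t Ht.
  specialize (H0 t Ht); specialize (H1 t Ht); specialize (H2 t Ht); specialize (H3 t Ht).
  change (Rabs (h t) <= M0) in H0. change (Rabs (Derive h t) <= M1) in H1.
  repeat split; lra.
Qed.

Lemma taylor2_lagrange h a s : C3 h -> s <> 0 ->
  exists z, Rmin a (a + s) <= z <= Rmax a (a + s) /\
    h (a + s) - h a - s * Derive h a - s ^ 2 / 2 * Derive_n h 2 a
    = s ^ 3 / 6 * Derive_n h 3 z.
Proof.
  intros [Hd _] Hs.
  assert (Hfact : forall k, INR (Factorial.fact k) = match k with
    | 0%nat => 1 | 1%nat => 1 | 2%nat => 2 | 3%nat => 6 | _ => INR (Factorial.fact k) end)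
    by (intros [|[|[|[|k]]]]; simpl; try ring; reflexivity).
  destruct (Rlt_or_le 0 s) as [Hpos|Hneg].
  - destruct (Taylor_Lagrange h 2 a (a + s)) as [z [Hz Heq]]; [lra | intros; apply Hd; lia |].
    exists z. rewrite Rmin_left, Rmax_right by lra. split; [lra|].
    cbn [sum_f_R0] in Heq. rewrite !Hfact in Heq.
    change (Derive_n h 0 a) with (h a) in Heq.
    change (Derive_n h 1 a) with (Derive h a) in Heq.
    replace (a + s - a) with s in Heq by ring. rewrite Heq. field.
  - destruct (Taylor_Lagrange (fun y => h (- y)) 2 (- a) (- a - s)) as [z [Hz Heq]]; [lra | |].
    { intros t _ k Hk. apply ex_derive_n_comp_opp.
      apply filter_forall; intros; apply Hd; lia. }
    exists (- z). rewrite Rmin_right, Rmax_left by lra. split; [lra|].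
    cbn [sum_f_R0] in Heq. rewrite !Hfact in Heq.
    rewrite !Derive_n_comp_opp in Heq by (apply filter_forall; intros; apply Hd; lia).
    rewrite !Ropp_involutive in Heq.
    change (Derive_n h 0 a) with (h a) in Heq.
    change (Derive_n h 1 a) with (Derive h a) in Heq.
    replace (- (- a - s)) with (a + s) in Heq by ring.
    replace (- a - s - - a) with (- s) in Heq by ring.
    rewrite Heq. field.
Qed.

Lemma taylor2_bound h M : C3 h -> (forall t, -1 <= t <= 2 -> Rabs (Derive_n h 3 t) <= M) ->
  forall a s, 0 <= a <= 1 -> -1 <= s <= 1 ->
  Rabs (h (a + s) - h a - s * Derive h a - s ^ 2 / 2 * Derive_n h 2 a) <= M / 6 * Rabs s ^ 3.
Proof.
  intros HC HM a s Ha Hs.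
  destruct (Req_dec s 0) as [->|Hs0].
  - rewrite Rplus_0_r.
    replace (h a - h a - 0 * Derive h a - 0 ^ 2 / 2 * Derive_n h 2 a) with 0 by field.
    rewrite Rabs_R0. simpl. lra.
  - destruct (taylor2_lagrange h a s HC Hs0) as [z [Hz ->]].
    assert (Hzr : -1 <= z <= 2).
    { revert Hz. unfold Rmin, Rmax. destruct Rle_dec; lra. }
    unfold Rdiv. rewrite !Rabs_mult, <- RPow_abs, (Rabs_right (/ 6)) by lra.
    assert (0 <= Rabs s ^ 3) by (apply pow_le, Rabs_pos).
    specialize (HM z Hzr). nra.
Qed.

Lemma Bop_eq h a : C3 h -> Bop h a = h a + a * Derive h a.
Proof.
  intros [Hd _]. unfold Bop. rewrite Derive_mult, Derive_id; [ring | apply ex_derive_id |].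
  apply (Hd 1%nat a). lia.
Qed.

(* Second-order coefficient of z |-> z h(z): (z h)''/2 = h' + z h''/2. *)
Definition Cop (h : R -> R) (a : R) : R := Derive h a + a * Derive_n h 2 a / 2.

Definition zrem (h : R -> R) (a s : R) : R :=
  (a + s) * h (a + s) - a * h a - s * Bop h a - s ^ 2 * Cop h a.

Lemma Aop_eq th h a : C3 h -> Aop th h a = 2 * (1 - a) * Cop h a + th * (h 0 - Bop h a).
Proof. intros HC. rewrite Bop_eq by exact HC. unfold Aop, Cop. field. Qed.

Lemma C3_coefficients h : C3 h -> exists K, 0 <= K /\ forall a, 0 <= a <= 1 ->
  Rabs (h a) <= K /\ Rabs (Bop h a) <= K /\ Rabs (Cop h a) <= K /\
  Rabs (Bop h a - h 0) <= K * a /\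
  forall s, -1 <= s <= 1 -> Rabs (zrem h a s) <= K * Rabs s ^ 3.
Proof.
  intros HC. destruct (C3_derivatives_bounded h HC) as [M [HM0 HM]].
  assert (HT := taylor2_bound h M HC (fun t Ht => proj2 (proj2 (proj2 (HM t Ht))))).
  exists (3 * M). split; [lra|]. intros a Ha.
  destruct (HM a ltac:(lra)) as (H0 & H1 & H2 & _).
  destruct (HM 0 ltac:(lra)) as (_ & H10 & H20 & _).
  apply Rabs_le_between in H0, H1, H2, H10, H20.
  unfold zrem, Cop. rewrite !Bop_eq by exact HC.
  repeat split.
  - apply Rabs_le; lra.
  - apply Rabs_le; split; nra.
  - apply Rabs_le; split; nra.
  - (* h(a) - h(0) is controlled by Taylor's formula at 0 with step a *)
    assert (Ht0 := HT 0 a ltac:(lra) ltac:(lra)).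
    rewrite Rplus_0_l, (Rabs_right a) in Ht0 by lra. apply Rabs_le_between in Ht0.
    assert (a ^ 3 <= a) by (simpl; nra). assert (0 <= a ^ 2 <= a) by (simpl; split; nra).
    apply Rabs_le; split; nra.
  - intros s Hs.
    (* zrem = (a + s) T + s^3/2 h''(a), T the Taylor remainder of h *)
    assert (Ht := HT a s Ha Hs).
    set (T := h (a + s) - h a - s * Derive h a - s ^ 2 / 2 * Derive_n h 2 a) in Ht.
    replace ((a + s) * h (a + s) - a * h a - s * (h a + a * Derive h a)
             - s ^ 2 * (Derive h a + a * Derive_n h 2 a / 2))
      with ((a + s) * T + s ^ 3 / 2 * Derive_n h 2 a) by (unfold T; field).
    eapply Rle_trans; [apply Rabs_triang|].
    unfold Rdiv. rewrite !Rabs_mult, <- RPow_abs, (Rabs_right (/ 2)) by lra.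
    assert (Rabs (a + s) <= 2) by (apply Rabs_le; lra).
    assert (0 <= Rabs s ^ 3) by (apply pow_le, Rabs_pos).
    assert (Rabs (Derive_n h 2 a) <= M) by (apply Rabs_le; lra).
    assert (0 <= Rabs T) by apply Rabs_pos.
    assert (0 <= Rabs (a + s)) by apply Rabs_pos.
    nra.
Qed.

(** Increments of mu(h) under a single jump. *)

(* Change of mu(h) when one particle of mass e leaves a site of mass a and
   joins a site of mass b. *)
Definition mu_increment (h : R -> R) (e a b : R) : R :=
  ((a - e) * h (a - e) - a * h a) + ((b + e) * h (b + e) - b * h b).

Lemma mu_increment_expansion h e a b :
  mu_increment h e a b = e * (Bop h b - Bop h a) + e ^ 2 * (Cop h a + Cop h b)
                         + zrem h a (- e) + zrem h b e.
Proof. unfold mu_increment, zrem. replace (a + - e) with (a - e) by ring. ring. Qed.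

Definition increment_bound (h : R -> R) (K : R) : Prop :=
  forall a b e, 0 <= a <= 1 -> 0 <= b <= 1 -> 0 < e <= 1 ->
  Rabs (h a) <= K /\ Rabs (Bop h a) <= K /\
  Rabs (mu_increment h e a b - e * (Bop h b - Bop h a)) <= K * e ^ 2.

Lemma increment_bound_exists h : C3 h -> exists K, 0 <= K /\ increment_bound h K.
Proof.
  intros HC. destruct (C3_coefficients h HC) as [K [HK0 HK]].
  exists (4 * K). split; [lra|]. intros a b e Ha Hb He.
  destruct (HK a Ha) as (Ha0 & Ha1 & Ha2 & _ & Har).
  destruct (HK b Hb) as (_ & _ & Hb2 & _ & Hbr).
  specialize (Har (- e) ltac:(lra)). specialize (Hbr e ltac:(lra)).
  rewrite Rabs_Ropp, (Rabs_right e) in Har by lra. rewrite (Rabs_right e) in Hbr by lra.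
  repeat split; [lra | lra |].
  rewrite mu_increment_expansion.
  replace (e * (Bop h b - Bop h a) + e ^ 2 * (Cop h a + Cop h b) + zrem h a (- e) + zrem h b e
           - e * (Bop h b - Bop h a))
    with (e ^ 2 * (Cop h a + Cop h b) + (zrem h a (- e) + zrem h b e)) by ring.
  assert (Rabs (Cop h a + Cop h b) <= 2 * K) by (eapply Rle_trans; [apply Rabs_triang | lra]).
  assert (Rabs (zrem h a (- e) + zrem h b e) <= 2 * K * e ^ 3)
    by (eapply Rle_trans; [apply Rabs_triang | lra]).
  eapply Rle_trans; [apply Rabs_triang|].
  rewrite Rabs_mult, (Rabs_right (e ^ 2)) by (apply Rle_ge, pow_le; lra).
  assert (e ^ 3 <= e ^ 2) by (simpl; nra). assert (0 <= e ^ 2) by (simpl; nra). nra.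
Qed.

Lemma increment_bound_mono h K K' : K <= K' -> increment_bound h K -> increment_bound h K'.
Proof.
  intros HKK' H a b e Ha Hb He. destruct (H a b e Ha Hb He) as (H1 & H2 & H3).
  assert (0 <= e ^ 2) by (simpl; nra). repeat split; nra.
Qed.

Lemma Bop_difference_bound h K a b : increment_bound h K ->
  0 <= a <= 1 -> 0 <= b <= 1 -> Rabs (Bop h b - Bop h a) <= 2 * K.
Proof.
  intros H Ha Hb.
  destruct (H a b 1 Ha Hb ltac:(lra)) as (_ & Ha1 & _).
  destruct (H b a 1 Hb Ha ltac:(lra)) as (_ & Hb1 & _).
  eapply Rle_trans; [apply Rabs_triang | rewrite Rabs_Ropp; lra].
Qed.

Lemma mu_increment_small h K a b e : increment_bound h K ->
  0 <= a <= 1 -> 0 <= b <= 1 -> 0 < e <= 1 -> Rabs (mu_increment h e a b) <= 3 * K * e.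
Proof.
  intros H Ha Hb He.
  destruct (H a b e Ha Hb He) as (_ & Ha1 & Hr).
  pose proof (Bop_difference_bound h K a b H Ha Hb) as HdB.
  replace (mu_increment h e a b)
    with ((mu_increment h e a b - e * (Bop h b - Bop h a)) + e * (Bop h b - Bop h a)) by ring.
  eapply Rle_trans; [apply Rabs_triang|]. rewrite Rabs_mult, (Rabs_right e) by lra.
  assert (0 <= K) by (eapply Rle_trans; [apply Rabs_pos | exact Ha1]).
  assert (K * e ^ 2 <= K * e) by (apply Rmult_le_compat_l; simpl; nra).
  assert (e * Rabs (Bop h b - Bop h a) <= e * (2 * K)) by (apply Rmult_le_compat_l; lra).
  lra.
Qed.

(* The product of two increments is e^2 dBh dBk up to O(e^3), using
   Dh Dk - e^2 dBh dBk = e dBh (Dk - e dBk) + (Dh - e dBh) Dk. *)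
Lemma increment_product_expansion h k K a b e : increment_bound h K -> increment_bound k K ->
  0 <= a <= 1 -> 0 <= b <= 1 -> 0 < e <= 1 ->
  Rabs (mu_increment h e a b * mu_increment k e a b
        - e ^ 2 * ((Bop h b - Bop h a) * (Bop k b - Bop k a))) <= 5 * K ^ 2 * e ^ 3.
Proof.
  intros Hh Hk Ha Hb He.
  destruct (Hh a b e Ha Hb He) as (_ & _ & Hrh).
  destruct (Hk a b e Ha Hb He) as (_ & _ & Hrk).
  pose proof (mu_increment_small k K a b e Hk Ha Hb He) as HDk.
  pose proof (Bop_difference_bound h K a b Hh Ha Hb) as HBh.
  set (Dh := mu_increment h e a b) in *. set (Dk := mu_increment k e a b) in *.
  set (dBh := Bop h b - Bop h a) in *. set (dBk := Bop k b - Bop k a) in *.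
  replace (Dh * Dk - e ^ 2 * (dBh * dBk)) with (e * dBh * (Dk - e * dBk) + (Dh - e * dBh) * Dk)
    by ring.
  eapply Rle_trans; [apply Rabs_triang|]. rewrite !Rabs_mult, (Rabs_right e) by lra.
  assert (e * Rabs dBh <= e * (2 * K)) by (apply Rmult_le_compat_l; lra).
  assert (e * Rabs dBh * Rabs (Dk - e * dBk) <= e * (2 * K) * (K * e ^ 2))
    by (apply Rmult_le_compat; [apply Rmult_le_pos; [lra | apply Rabs_pos] | apply Rabs_pos | lra | lra]).
  assert (Rabs (Dh - e * dBh) * Rabs Dk <= (K * e ^ 2) * (3 * K * e))
    by (apply Rmult_le_compat; try apply Rabs_pos; lra).
  replace (5 * K ^ 2 * e ^ 3) with (e * (2 * K) * (K * e ^ 2) + (K * e ^ 2) * (3 * K * e)) by ring.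
  lra.
Qed.

Definition prob L (a : nat -> R) : Prop := (forall x, (x < L)%nat -> 0 <= a x <= 1) /\ rsum L a = 1.

Definition avg L (a : nat -> R) (g : R -> R) : R := rsum L (fun x => a x * g (a x)).

(* Jump rate eta_x (d + eta_y) of the inclusion process, eta = N a. *)
Definition rate (Nr d : R) (a : nat -> R) (x y : nat) : R := Nr * a x * (d + Nr * a y).

Definition errq (th : R) (L : nat) (Nr d : R) : R :=
  Rabs (d * INR L - th) + d + (1 + d * INR L) / Nr.

Lemma errq_nonneg th L Nr d : 1 <= Nr -> 0 <= d -> 0 <= errq th L Nr d.
Proof.
  intros. unfold errq. assert (0 <= INR L) by apply pos_INR.
  assert (0 <= (1 + d * INR L) / Nr) by (apply Rdiv_le_0_compat; nra).
  pose proof (Rabs_pos (d * INR L - th)). lra.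
Qed.

Lemma errq_ge th L Nr d : 1 <= Nr -> 0 <= d -> Rabs (d * INR L - th) + d <= errq th L Nr d.
Proof.
  intros. unfold errq. assert (0 <= INR L) by apply pos_INR.
  assert (0 <= (1 + d * INR L) / Nr) by (apply Rdiv_le_0_compat; nra). lra.
Qed.

Lemma weighted_avg_bound L a (g : nat -> R) K : prob L a ->
  (forall x, (x < L)%nat -> Rabs (g x) <= K) -> Rabs (rsum L (fun x => a x * g x)) <= K.
Proof.
  intros [Ha Hs] Hg. eapply Rle_trans.
  - apply (rsum_abs_le L _ (fun x => a x * K)). intros x Hx.
    destruct (Ha x Hx). rewrite Rabs_mult, (Rabs_right (a x)) by lra.
    apply Rmult_le_compat_l; auto.
  - rewrite rsum_scal_r, Hs. lra.
Qed.

Lemma rate_total L Nr d a : rsum L a = 1 -> dsum L (rate Nr d a) = Nr * (d * INR L + Nr).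
Proof.
  intros Hs. unfold rate.
  rewrite (dsum_ext L _ (fun x y => (Nr * d) * a x * 1 + (Nr * Nr) * a x * a y)) by (intros; ring).
  rewrite dsum_plus, !dsum_sep, Hs, rsum_const. ring.
Qed.

Lemma cubic_remainder_sum th L Nr d a (F : nat -> nat -> R) c :
  1 <= Nr -> 0 <= d -> prob L a -> 0 <= c ->
  (forall x y, (x < L)%nat -> (y < L)%nat -> Rabs (F x y) <= c * (/ Nr) ^ 3) ->
  Rabs (osum L (fun x y => rate Nr d a x y * F x y)) <= c * errq th L Nr d.
Proof.
  intros HN Hd [Ha Hs] Hc HF.
  eapply Rle_trans; [apply osum_weighted_bound; [|exact HF]|].
  - intros x y Hx Hy. destruct (Ha x Hx), (Ha y Hy). unfold rate.
    apply Rmult_le_pos; nra.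
  - rewrite rate_total by exact Hs. unfold errq.
    assert (0 <= INR L) by apply pos_INR. assert (0 < / Nr <= 1) by
      (split; [apply Rinv_0_lt_compat; lra | rewrite <- Rinv_1; apply Rinv_le_contravar; lra]).
    replace (c * (/ Nr) ^ 3 * (Nr * (d * INR L + Nr)))
      with (c * (d * INR L * / Nr * / Nr + / Nr)) by (field; lra).
    unfold Rdiv. pose proof (Rabs_pos (d * INR L - th)).
    assert (0 <= d * INR L * / Nr) by (apply Rmult_le_pos; nra).
    assert (d * INR L * / Nr * / Nr <= d * INR L * / Nr) by nra.
    nra.
Qed.

Lemma drift_remainder_sum th L Nr d a (F : nat -> nat -> R) c :
  1 <= Nr -> 0 <= d -> prob L a -> 0 <= c ->
  (forall x y, (x < L)%nat -> (y < L)%nat -> Rabs (F x y) <= c) ->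
  Rabs (osum L (fun x y => d * / Nr * a x * F x y)) <= c * errq th L Nr d.
Proof.
  intros HN Hd [Ha Hs] Hc HF.
  assert (0 < / Nr) by (apply Rinv_0_lt_compat; lra).
  eapply Rle_trans; [apply osum_weighted_bound; [|exact HF]|].
  - intros x y Hx Hy. destruct (Ha x Hx). apply Rmult_le_pos; nra.
  - rewrite (dsum_ext L _ (fun x y => (d * / Nr) * a x * 1)) by (intros; ring).
    rewrite dsum_sep, Hs, rsum_const. unfold errq, Rdiv.
    pose proof (Rabs_pos (d * INR L - th)). assert (0 <= INR L) by apply pos_INR.
    assert (0 <= d * INR L) by nra. nra.
Qed.

Lemma osum_drift L a d Nr (B : nat -> R) : rsum L a = 1 ->
  osum L (fun x y => a x * (d + Nr * a y) * (B y - B x))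
  = d * rsum L B - d * INR L * rsum L (fun x => a x * B x).
Proof.
  intros Hs. rewrite osum_diag0 by (intros; ring).
  rewrite (dsum_ext L _ (fun x y => (d * a x * B y + (- d) * (a x * B x) * 1)
                                   + (Nr * a x * (a y * B y) + (- Nr) * (a x * B x) * a y)))
    by (intros; ring).
  rewrite !dsum_plus, !dsum_sep, rsum_const, Hs. ring.
Qed.

Lemma osum_symmetric L a (C : nat -> R) : rsum L a = 1 ->
  osum L (fun x y => a x * a y * (C x + C y))
  = 2 * rsum L (fun x => a x * C x) - 2 * rsum L (fun x => a x * (a x * C x)).
Proof.
  intros Hs. rewrite osum_diag.
  rewrite (dsum_ext L _ (fun x y => 1 * (a x * C x) * a y + 1 * a x * (a y * C y))) by (intros; ring).
  rewrite dsum_plus, !dsum_sep, Hs.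
  rewrite (rsum_ext L (fun x => a x * a x * (C x + C x)) (fun x => 2 * (a x * (a x * C x))))
    by (intros; ring).
  rewrite rsum_scal_l. ring.
Qed.

Lemma osum_covariance L a (F G : nat -> R) : rsum L a = 1 ->
  osum L (fun x y => a x * a y * ((F y - F x) * (G y - G x)))
  = 2 * (rsum L (fun x => a x * (F x * G x))
         - rsum L (fun x => a x * F x) * rsum L (fun x => a x * G x)).
Proof.
  intros Hs. rewrite osum_diag0 by (intros; ring).
  rewrite (dsum_ext L _ (fun x y => (1 * a x * (a y * (F y * G y)) + (-1) * (a x * G x) * (a y * F y))
         + ((-1) * (a x * F x) * (a y * G y) + 1 * (a x * (F x * G x)) * a y))) by (intros; ring).
  rewrite !dsum_plus, !dsum_sep, Hs. ring.
Qed.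

Definition controlled th (E : nat -> R -> R -> (nat -> R) -> R) (K : R) : Prop :=
  forall L Nr d a, 1 <= Nr -> 0 <= d -> prob L a -> Rabs (E L Nr d a) <= K * errq th L Nr d.

Lemma controlled_mono th E K K' : K <= K' -> controlled th E K -> controlled th E K'.
Proof.
  intros HK H L Nr d a HN Hd Hp. eapply Rle_trans; [apply H; auto|].
  apply Rmult_le_compat_r; [apply errq_nonneg|]; auto.
Qed.

Definition single_err th h L Nr d a : R :=
  osum L (fun x y => rate Nr d a x y * mu_increment h (/ Nr) (a x) (a y)) - avg L a (Aop th h).

Definition pair_err h k L Nr d a : R :=
  osum L (fun x y => rate Nr d a x y
                     * (mu_increment h (/ Nr) (a x) (a y) * mu_increment k (/ Nr) (a x) (a y)))
  - 2 * (avg L a (fun z => Bop h z * Bop k z) - avg L a (Bop h) * avg L a (Bop k)).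

(* Exact decomposition: the drift term d (sum_x (B h(a_x) - h 0)), the mismatch
   (dL - theta), and two remainders of orders d L / N and 1 / N. *)
Lemma single_err_decomposition th h L Nr d a : C3 h -> 0 < Nr -> rsum L a = 1 ->
  single_err th h L Nr d a =
    d * rsum L (fun x => Bop h (a x) - h 0) + (d * INR L - th) * (h 0 - avg L a (Bop h))
  + osum L (fun x y => d * / Nr * a x * (Cop h (a x) + Cop h (a y)))
  + osum L (fun x y => rate Nr d a x y * (zrem h (a x) (- / Nr) + zrem h (a y) (/ Nr))).
Proof.
  intros HC HN Hs. unfold single_err.
  rewrite (osum_ext L _ (fun x y =>
      a x * (d + Nr * a y) * (Bop h (a y) - Bop h (a x))
    + d * / Nr * a x * (Cop h (a x) + Cop h (a y))
    + a x * a y * (Cop h (a x) + Cop h (a y))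
    + rate Nr d a x y * (zrem h (a x) (- / Nr) + zrem h (a y) (/ Nr)))).
  2: { intros. unfold rate. rewrite mu_increment_expansion. field. lra. }
  rewrite !osum_plus, osum_drift, osum_symmetric by exact Hs.
  unfold avg.
  rewrite (rsum_ext L (fun x => a x * Aop th h (a x)) (fun x =>
      2 * (a x * Cop h (a x)) - 2 * (a x * (a x * Cop h (a x)))
    + (th * h 0) * a x - th * (a x * Bop h (a x))))
    by (intros; rewrite Aop_eq by exact HC; ring).
  rewrite !rsum_minus, rsum_plus, rsum_minus, !rsum_scal_l, rsum_const, Hs. ring.
Qed.

Lemma single_err_controlled th h : C3 h -> exists K, 0 <= K /\ controlled th (single_err th h) K.
Proof.
  intros HC. destruct (C3_coefficients h HC) as [K [HK0 HK]].
  exists (6 * K). split; [lra|]. intros L Nr d a HN Hd Hp.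
  pose proof Hp as [Ha Hs].
  rewrite single_err_decomposition by (auto; lra).
  assert (He : 0 < / Nr <= 1) by
    (split; [apply Rinv_0_lt_compat; lra | rewrite <- Rinv_1; apply Rinv_le_contravar; lra]).
  assert (Hdrift : Rabs (d * rsum L (fun x => Bop h (a x) - h 0)) <= K * d).
  { rewrite Rabs_mult, (Rabs_right d), Rmult_comm by lra. apply Rmult_le_compat_r; [lra|].
    eapply Rle_trans; [apply (rsum_abs_le L _ (fun x => K * a x)); intros x Hx; apply HK; auto|].
    rewrite rsum_scal_l, Hs. lra. }
  assert (Hmis : Rabs ((d * INR L - th) * (h 0 - avg L a (Bop h)))
                 <= 2 * K * Rabs (d * INR L - th)).
  { rewrite Rabs_mult, Rmult_comm. apply Rmult_le_compat_r; [apply Rabs_pos|].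
    assert (Rabs (avg L a (Bop h)) <= K) by (apply weighted_avg_bound; auto; intros; apply HK; auto).
    assert (Rabs (h 0) <= K) by (apply HK; lra).
    eapply Rle_trans; [apply Rabs_triang | rewrite Rabs_Ropp; lra]. }
  assert (HC2 : Rabs (osum L (fun x y => d * / Nr * a x * (Cop h (a x) + Cop h (a y))))
                <= 2 * K * errq th L Nr d).
  { apply drift_remainder_sum; auto; [lra|]. intros x y Hx Hy.
    eapply Rle_trans; [apply Rabs_triang|].
    assert (Rabs (Cop h (a x)) <= K) by (apply HK; auto).
    assert (Rabs (Cop h (a y)) <= K) by (apply HK; auto). lra. }
  assert (HC3 : Rabs (osum L (fun x y => rate Nr d a x y * (zrem h (a x) (- / Nr) + zrem h (a y) (/ Nr))))
                <= 2 * K * errq th L Nr d).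
  { apply cubic_remainder_sum; auto; [lra|]. intros x y Hx Hy.
    destruct (HK (a x) (Ha x Hx)) as (_ & _ & _ & _ & Hx3).
    destruct (HK (a y) (Ha y Hy)) as (_ & _ & _ & _ & Hy3).
    specialize (Hx3 (- / Nr) ltac:(lra)). specialize (Hy3 (/ Nr) ltac:(lra)).
    rewrite Rabs_Ropp, (Rabs_right (/ Nr)) in Hx3 by lra. rewrite (Rabs_right (/ Nr)) in Hy3 by lra.
    eapply Rle_trans; [apply Rabs_triang | lra]. }
  pose proof (errq_ge th L Nr d HN Hd). pose proof (Rabs_pos (d * INR L - th)).
  eapply Rle_trans; [apply Rabs_triang|].
  eapply Rle_trans; [apply Rplus_le_compat_r, Rabs_triang|].
  eapply Rle_trans; [apply Rplus_le_compat_r, Rplus_le_compat_r, Rabs_triang|].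
  nra.
Qed.

Lemma pair_err_decomposition h k L Nr d a : 0 < Nr -> rsum L a = 1 ->
  pair_err h k L Nr d a =
    osum L (fun x y => d * / Nr * a x
                       * ((Bop h (a y) - Bop h (a x)) * (Bop k (a y) - Bop k (a x))))
  + osum L (fun x y => rate Nr d a x y
      * (mu_increment h (/ Nr) (a x) (a y) * mu_increment k (/ Nr) (a x) (a y)
         - (/ Nr) ^ 2 * ((Bop h (a y) - Bop h (a x)) * (Bop k (a y) - Bop k (a x))))).
Proof.
  intros HN Hs. unfold pair_err.
  rewrite (osum_ext L _ (fun x y =>
      a x * a y * ((Bop h (a y) - Bop h (a x)) * (Bop k (a y) - Bop k (a x)))
    + d * / Nr * a x * ((Bop h (a y) - Bop h (a x)) * (Bop k (a y) - Bop k (a x)))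
    + rate Nr d a x y
      * (mu_increment h (/ Nr) (a x) (a y) * mu_increment k (/ Nr) (a x) (a y)
         - (/ Nr) ^ 2 * ((Bop h (a y) - Bop h (a x)) * (Bop k (a y) - Bop k (a x)))))).
  2: { intros. unfold rate. field. lra. }
  rewrite !osum_plus, osum_covariance by exact Hs. unfold avg. ring.
Qed.

Lemma pair_err_controlled th h k : C3 h -> C3 k ->
  exists K, 0 <= K /\ controlled th (pair_err h k) K.
Proof.
  intros Hh Hk.
  destruct (increment_bound_exists h Hh) as [Kh [HKh0 HKh]].
  destruct (increment_bound_exists k Hk) as [Kk [HKk0 HKk]].
  set (K := Kh + Kk).
  apply (increment_bound_mono h Kh K) in HKh; [|unfold K; lra].
  apply (increment_bound_mono k Kk K) in HKk; [|unfold K; lra].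
  assert (HK0 : 0 <= K) by (unfold K; lra).
  exists (4 * K ^ 2 + 5 * K ^ 2). split; [simpl; nra|]. intros L Nr d a HN Hd Hp.
  pose proof Hp as [Ha Hs].
  assert (He : 0 < / Nr <= 1) by
    (split; [apply Rinv_0_lt_compat; lra | rewrite <- Rinv_1; apply Rinv_le_contravar; lra]).
  rewrite pair_err_decomposition, Rmult_plus_distr_r by (auto; lra).
  eapply Rle_trans; [apply Rabs_triang|]. apply Rplus_le_compat.
  - apply drift_remainder_sum; auto; [simpl; nra|]. intros x y Hx Hy.
    rewrite Rabs_mult. replace (4 * K ^ 2) with ((2 * K) * (2 * K)) by ring.
    apply Rmult_le_compat; try apply Rabs_pos; apply Bop_difference_bound; auto.
  - apply cubic_remainder_sum; auto; [simpl; nra|]. intros x y Hx Hy.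
    apply increment_product_expansion; auto.
Qed.

(** Expansion of a product of perturbed factors prod_j (F_j + D_j) to second order. *)

Definition prod_order1 n (F D : nat -> R) : R :=
  rsum n (fun k => D k * rprod n (fun j => if (j =? k)%nat then 1 else F j)).

Definition prod_order2 n (F D : nat -> R) : R :=
  rsum n (fun k => rsum n (fun l => if (k <? l)%nat then
    D k * D l * rprod n (fun j => if orb (j =? k)%nat (j =? l)%nat then 1 else F j) else 0)).

Definition prod_rest n (F D : nat -> R) : R :=
  rprod n (fun j => F j + D j) - rprod n F - prod_order1 n F D - prod_order2 n F D.

Lemma prod_order1_S n F D :
  prod_order1 (S n) F D = prod_order1 n F D * F n + D n * rprod n F.
Proof.
  unfold prod_order1. cbn [rsum]. rewrite <- rsum_scal_r. f_equal.
  - apply rsum_ext; intros k Hk. cbn [rprod]. destruct (Nat.eqb_spec n k); [lia|]. ring.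
  - cbn [rprod]. rewrite Nat.eqb_refl, Rmult_1_r. f_equal. apply rprod_ext; intros j Hj.
    destruct (Nat.eqb_spec j n); [lia | auto].
Qed.

Lemma prod_order2_S n F D :
  prod_order2 (S n) F D = prod_order2 n F D * F n + D n * prod_order1 n F D.
Proof.
  unfold prod_order2, prod_order1. rewrite rsum_S.
  rewrite (rsum_ext (S n) (fun l => if (n <? l)%nat then _ else 0) (fun _ => 0)).
  2: { intros l Hl. destruct (Nat.ltb_spec n l); [lia | auto]. }
  rewrite rsum_0, Rplus_0_r, <- rsum_scal_r, <- rsum_scal_l, <- rsum_plus.
  apply rsum_ext; intros k Hk. rewrite rsum_S, <- rsum_scal_r. f_equal.
  - apply rsum_ext; intros l Hl. destruct (Nat.ltb_spec k l); [|ring]. cbn [rprod].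
    destruct (Nat.eqb_spec n k); [lia|]. destruct (Nat.eqb_spec n l); [lia|]. simpl. ring.
  - destruct (Nat.ltb_spec k n); [|lia]. cbn [rprod].
    rewrite Nat.eqb_refl, Bool.orb_true_r, Rmult_1_r.
    rewrite (rprod_ext n _ (fun j => if (j =? k)%nat then 1 else F j)); [ring|].
    intros j Hj. destruct (Nat.eqb_spec j n); [lia|]. rewrite Bool.orb_false_r. auto.
Qed.

Lemma prod_rest_S n F D :
  prod_rest (S n) F D = prod_rest n F D * F n + D n * (prod_order2 n F D + prod_rest n F D).
Proof. unfold prod_rest. rewrite prod_order1_S, prod_order2_S. cbn [rprod]. ring. Qed.

Lemma prod_order1_bound n M : 0 <= M -> exists K, 0 <= K /\ forall F D d, 0 <= d ->
  (forall j, (j < n)%nat -> Rabs (F j) <= M /\ Rabs (D j) <= d) -> Rabs (prod_order1 n F D) <= K * d.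
Proof.
  intros HM. induction n as [|n [K [HK IH]]].
  - exists 0. split; [lra|]. intros. unfold prod_order1. simpl. rewrite Rabs_R0. lra.
  - exists (K * M + M ^ n). split; [pose proof (pow_le M n HM); nra|].
    intros F D d Hd H. rewrite prod_order1_S.
    assert (H1 : Rabs (prod_order1 n F D) <= K * d) by (apply IH; auto; intros; apply H; lia).
    assert (H2 : Rabs (rprod n F) <= M ^ n)
      by (apply rprod_abs_le; auto; intros; apply H; lia).
    destruct (H n ltac:(lia)) as [H3 H4].
    eapply Rle_trans; [apply Rabs_triang|]. rewrite !Rabs_mult.
    pose proof (Rabs_pos (prod_order1 n F D)). pose proof (Rabs_pos (F n)).
    pose proof (Rabs_pos (D n)). pose proof (Rabs_pos (rprod n F)). nra.
Qed.

Lemma prod_order2_bound n M : 0 <= M -> exists K, 0 <= K /\ forall F D d, 0 <= d ->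
  (forall j, (j < n)%nat -> Rabs (F j) <= M /\ Rabs (D j) <= d) ->
  Rabs (prod_order2 n F D) <= K * d ^ 2.
Proof.
  intros HM. induction n as [|n [K [HK IH]]].
  - exists 0. split; [lra|]. intros. unfold prod_order2. simpl. rewrite Rabs_R0. lra.
  - destruct (prod_order1_bound n M HM) as [K1 [HK1 IH1]].
    exists (K * M + K1). split; [nra|]. intros F D d Hd H. rewrite prod_order2_S.
    assert (H1 : Rabs (prod_order2 n F D) <= K * d ^ 2) by (apply IH; auto; intros; apply H; lia).
    assert (H2 : Rabs (prod_order1 n F D) <= K1 * d) by (apply IH1; auto; intros; apply H; lia).
    destruct (H n ltac:(lia)) as [H3 H4].
    eapply Rle_trans; [apply Rabs_triang|]. rewrite !Rabs_mult.
    pose proof (Rabs_pos (prod_order2 n F D)). pose proof (Rabs_pos (F n)).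
    pose proof (Rabs_pos (D n)). pose proof (Rabs_pos (prod_order1 n F D)).
    simpl in *. nra.
Qed.

Lemma prod_rest_bound n M : 0 <= M -> exists K, 0 <= K /\ forall F D d, 0 <= d <= 1 ->
  (forall j, (j < n)%nat -> Rabs (F j) <= M /\ Rabs (D j) <= d) ->
  Rabs (prod_rest n F D) <= K * d ^ 3.
Proof.
  intros HM. induction n as [|n [K [HK IH]]].
  - exists 0. split; [lra|]. intros F D d _ _.
    replace (prod_rest 0 F D) with 0 by (unfold prod_rest, prod_order1, prod_order2; simpl; ring).
    rewrite Rabs_R0. lra.
  - destruct (prod_order2_bound n M HM) as [K2 [HK2 IH2]].
    exists (K * M + K2 + K). split; [nra|]. intros F D d Hd H. rewrite prod_rest_S.
    assert (H1 : Rabs (prod_rest n F D) <= K * d ^ 3) by (apply IH; auto; intros; apply H; lia).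
    assert (H2 : Rabs (prod_order2 n F D) <= K2 * d ^ 2) by (apply IH2; [lra|]; intros; apply H; lia).
    destruct (H n ltac:(lia)) as [H3 H4].
    assert (H5 : Rabs (prod_order2 n F D + prod_rest n F D) <= K2 * d ^ 2 + K * d ^ 3)
      by (eapply Rle_trans; [apply Rabs_triang | lra]).
    eapply Rle_trans; [apply Rabs_triang|]. rewrite !Rabs_mult.
    pose proof (Rabs_pos (prod_rest n F D)). pose proof (Rabs_pos (F n)).
    pose proof (Rabs_pos (D n)). pose proof (Rabs_pos (prod_order2 n F D + prod_rest n F D)).
    assert (0 <= d ^ 3) by (apply pow_le; lra).
    assert (d ^ 4 <= d ^ 3) by (replace (d ^ 4) with (d ^ 3 * d) by ring; nra).
    assert (Rabs (D n) * Rabs (prod_order2 n F D + prod_rest n F D)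
            <= d * (K2 * d ^ 2 + K * d ^ 3)) by nra.
    assert (Rabs (prod_rest n F D) * Rabs (F n) <= K * d ^ 3 * M) by nra.
    simpl in *. nra.
Qed.

Lemma osum_prod_order1 L n (r : nat -> nat -> R) F (D : nat -> nat -> nat -> R) :
  osum L (fun x y => r x y * prod_order1 n F (fun j => D j x y)) =
  rsum n (fun k => osum L (fun x y => r x y * D k x y)
                   * rprod n (fun j => if (j =? k)%nat then 1 else F j)).
Proof.
  unfold prod_order1.
  transitivity (osum L (fun x y => rsum n (fun k =>
    r x y * D k x y * rprod n (fun j => if (j =? k)%nat then 1 else F j)))).
  - apply osum_ext; intros. rewrite <- rsum_scal_l. apply rsum_ext; intros; ring.
  - rewrite osum_rsum. apply rsum_ext; intros. apply osum_scal_r.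
Qed.

Lemma osum_prod_order2 L n (r : nat -> nat -> R) F (D : nat -> nat -> nat -> R) :
  osum L (fun x y => r x y * prod_order2 n F (fun j => D j x y)) =
  rsum n (fun k => rsum n (fun l => if (k <? l)%nat then
     osum L (fun x y => r x y * (D k x y * D l x y))
     * rprod n (fun j => if orb (j =? k)%nat (j =? l)%nat then 1 else F j)
     else 0)).
Proof.
  unfold prod_order2.
  transitivity (osum L (fun x y => rsum n (fun k => rsum n (fun l => if (k <? l)%nat then
     r x y * (D k x y * D l x y) * rprod n (fun j => if orb (j =? k)%nat (j =? l)%nat then 1 else F j)
     else 0)))).
  - apply osum_ext; intros. rewrite <- rsum_scal_l. apply rsum_ext; intros.
    rewrite <- rsum_scal_l. apply rsum_ext; intros. destruct (_ <? _)%nat; ring.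
  - rewrite osum_rsum. apply rsum_ext; intros. rewrite osum_rsum. apply rsum_ext; intros.
    destruct (_ <? _)%nat; [apply osum_scal_r | apply osum_0].
Qed.

Definition av (N : nat) (eta : nat -> nat) (x : nat) : R := INR (eta x) / INR N.

Lemma nsum_INR L eta : INR (nsum L eta) = rsum L (fun x => INR (eta x)).
Proof. induction L; simpl; auto. rewrite plus_INR, IHL. reflexivity. Qed.

Lemma nsum_ge L eta x : (x < L)%nat -> (eta x <= nsum L eta)%nat.
Proof.
  induction L as [|L IH]; intros Hx; simpl; [lia|].
  destruct (Nat.eq_dec x L) as [->|Hne]; [lia|]. specialize (IH ltac:(lia)). lia.
Qed.

Lemma av_prob L N eta : 0 < INR N -> nsum L eta = N -> prob L (av N eta).
Proof.
  intros HN Hs. split.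
  - intros x Hx. unfold av. split; [apply Rdiv_le_0_compat; [apply pos_INR | lra]|].
    apply (Rmult_le_reg_r (INR N)); auto. unfold Rdiv.
    rewrite Rmult_assoc, Rinv_l, Rmult_1_r, Rmult_1_l by lra.
    apply le_INR. rewrite <- Hs. apply nsum_ge; auto.
  - unfold av, Rdiv. rewrite rsum_scal_r, <- nsum_INR, Hs. field. lra.
Qed.

Lemma mu_jump L N eta x y g : (x < L)%nat -> (y < L)%nat -> x <> y -> (1 <= eta x)%nat ->
  0 < INR N ->
  mu_eta L N (jump eta x y) g
  = mu_eta L N eta g + mu_increment g (/ INR N) (av N eta x) (av N eta y).
Proof.
  intros Hx Hy Hxy H1 HN. unfold mu_increment.
  set (cx := (av N eta x - / INR N) * g (av N eta x - / INR N) - av N eta x * g (av N eta x)).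
  set (cy := (av N eta y + / INR N) * g (av N eta y + / INR N) - av N eta y * g (av N eta y)).
  rewrite <- (rsum_delta L x cx), <- (rsum_delta L y cy) by auto.
  unfold mu_eta. rewrite <- !rsum_plus. apply rsum_ext. intros z Hz. unfold jump.
  destruct (Nat.eqb_spec z x), (Nat.eqb_spec z y); subst; try lia.
  - unfold cx, av. rewrite minus_INR by auto. simpl INR.
    replace ((INR (eta x) - 1) / INR N) with (INR (eta x) / INR N - / INR N) by (field; lra).
    ring.
  - unfold cy, av. rewrite plus_INR. simpl INR.
    replace ((INR (eta y) + 1) / INR N) with (INR (eta y) / INR N + / INR N) by (field; lra).
    ring.
  - ring.
Qed.

Lemma rprod_shift n f : rprod (S n) f = f 0%nat * rprod n (fun j => f (S j)).
Proof.
  induction n as [|n IH]; [simpl; ring|].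
  change (rprod (S (S n)) f) with (rprod (S n) f * f (S n)). rewrite IH. simpl. ring.
Qed.

Lemma mon_eval_rprod ev hs : mon_eval ev hs = rprod (length hs) (fun j => ev (nth j hs hzero)).
Proof.
  unfold mon_eval. induction hs as [|h hs IH]; [reflexivity|].
  cbn [fold_right length]. rewrite rprod_shift. cbn [nth]. rewrite IH. reflexivity.
Qed.

Lemma gen_monomial L N d eta hs : 0 < INR N ->
  gen L d (fun xi => mon_eval (mu_eta L N xi) hs) eta =
  osum L (fun x y => rate (INR N) d (av N eta) x y *
     (rprod (length hs) (fun j => avg L (av N eta) (nth j hs hzero)
                          + mu_increment (nth j hs hzero) (/ INR N) (av N eta x) (av N eta y))
      - rprod (length hs) (fun j => avg L (av N eta) (nth j hs hzero)))).
Proof.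
  intros HN. apply osum_ext. intros x y Hx Hy Hxy. rewrite !mon_eval_rprod. unfold rate.
  replace (INR N * av N eta x) with (INR (eta x)) by (unfold av; field; lra).
  replace (INR N * av N eta y) with (INR (eta y)) by (unfold av; field; lra).
  destruct (eta x) as [|m] eqn:Ex; [simpl; ring|].
  f_equal. f_equal. apply rprod_ext. intros j _. rewrite mu_jump by (auto; lia). reflexivity.
Qed.

Lemma regroup n (A1 B1 P1 : nat -> R) (A2 B2 P2 : nat -> nat -> R) X :
  rsum n (fun k => A1 k * P1 k)
  + rsum n (fun k => rsum n (fun l => if (k <? l)%nat then A2 k l * P2 k l else 0)) + X
  - (2 * rsum n (fun k => rsum n (fun l => if (k <? l)%nat then B2 k l * P2 k l else 0))
     + rsum n (fun k => B1 k * P1 k))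
  = rsum n (fun k => (A1 k - B1 k) * P1 k)
  + rsum n (fun k => rsum n (fun l => if (k <? l)%nat then (A2 k l - 2 * B2 k l) * P2 k l else 0))
  + X.
Proof.
  rewrite <- rsum_scal_l.
  rewrite (rsum_ext n (fun k => (A1 k - B1 k) * P1 k) (fun k => A1 k * P1 k - B1 k * P1 k))
    by (intros; ring).
  rewrite (rsum_ext n (fun k => rsum n (fun l => if (k <? l)%nat then (A2 k l - 2 * B2 k l) * P2 k l else 0))
    (fun k => rsum n (fun l => if (k <? l)%nat then A2 k l * P2 k l else 0)
              - 2 * rsum n (fun l => if (k <? l)%nat then B2 k l * P2 k l else 0))).
  - rewrite !rsum_minus. ring.
  - intros k _. rewrite <- rsum_scal_l, <- rsum_minus. apply rsum_ext; intros.
    destruct (k <? _)%nat; ring.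
Qed.

Lemma monomial_error_identity th L N d eta hs : 0 < INR N ->
  gen L d (fun xi => mon_eval (mu_eta L N xi) hs) eta - Lmon th (mu_eta L N eta) hs
  = rsum (length hs) (fun k => single_err th (nth k hs hzero) L (INR N) d (av N eta)
      * rprod (length hs) (fun j => if (j =? k)%nat then 1 else avg L (av N eta) (nth j hs hzero)))
  + rsum (length hs) (fun k => rsum (length hs) (fun l => if (k <? l)%nat then
      pair_err (nth k hs hzero) (nth l hs hzero) L (INR N) d (av N eta)
      * rprod (length hs) (fun j => if orb (j =? k)%nat (j =? l)%nat then 1
                                    else avg L (av N eta) (nth j hs hzero))
      else 0))
  + osum L (fun x y => rate (INR N) d (av N eta) x y
      * prod_rest (length hs) (fun j => avg L (av N eta) (nth j hs hzero))
          (fun j => mu_increment (nth j hs hzero) (/ INR N) (av N eta x) (av N eta y))).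
Proof.
  intros HN. rewrite gen_monomial by exact HN.
  set (F := fun j => avg L (av N eta) (nth j hs hzero)).
  set (D := fun j x y => mu_increment (nth j hs hzero) (/ INR N) (av N eta x) (av N eta y)).
  set (r := rate (INR N) d (av N eta)).
  rewrite (osum_ext L _ (fun x y => r x y * prod_order1 (length hs) F (fun j => D j x y)
      + r x y * prod_order2 (length hs) F (fun j => D j x y)
      + r x y * prod_rest (length hs) F (fun j => D j x y)))
    by (intros; unfold prod_rest, F, D; cbv beta; ring).
  rewrite !osum_plus, osum_prod_order1, osum_prod_order2.
  unfold Lmon. cbv zeta. rewrite regroup. reflexivity.
Qed.

Lemma uniform_constant (Q : nat -> R -> Prop) n :
  (forall k K K', Q k K -> K <= K' -> Q k K') ->
  (forall k, (k < n)%nat -> exists K, Q k K) ->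
  exists K, 0 <= K /\ forall k, (k < n)%nat -> Q k K.
Proof.
  intros Hmono. induction n as [|n IH]; intros H.
  - exists 0. split; [lra | intros; lia].
  - destruct IH as [K [HK0 HK]]; [intros; apply H; lia|].
    destruct (H n ltac:(lia)) as [Kn HKn].
    exists (K + Rabs Kn). pose proof (Rabs_pos Kn). pose proof (Rle_abs Kn).
    split; [lra|]. intros k Hk. destruct (Nat.eq_dec k n) as [->|Hne].
    + apply (Hmono _ Kn); auto. lra.
    + apply (Hmono _ K); [apply HK; lia | lra].
Qed.

Lemma rprod_masked_bound n (b : nat -> bool) F M : 1 <= M ->
  (forall j, (j < n)%nat -> Rabs (F j) <= M) ->
  Rabs (rprod n (fun j => if b j then 1 else F j)) <= M ^ n.
Proof.
  intros HM HF. apply rprod_abs_le; [lra|]. intros j Hj.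
  destruct (b j); [rewrite Rabs_R1; lra | auto].
Qed.

Lemma monomial_rest_bound th hs KD : 0 <= KD ->
  (forall j, (j < length hs)%nat -> increment_bound (nth j hs hzero) KD) ->
  exists KE, 0 <= KE /\ forall L N d eta,
    1 <= INR N -> 3 * KD <= INR N -> 0 <= d -> nsum L eta = N ->
    Rabs (osum L (fun x y => rate (INR N) d (av N eta) x y
      * prod_rest (length hs) (fun j => avg L (av N eta) (nth j hs hzero))
          (fun j => mu_increment (nth j hs hzero) (/ INR N) (av N eta x) (av N eta y))))
    <= KE * errq th L (INR N) d.
Proof.
  intros HKD0 HKD. destruct (prod_rest_bound (length hs) KD HKD0) as [KE [HKE0 HKE]].
  exists (KE * (3 * KD) ^ 3). split; [apply Rmult_le_pos; [lra | apply pow_le; lra]|].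
  intros L N d eta HN1 HN3 Hd Hs.
  assert (Hp : prob L (av N eta)) by (apply av_prob; auto; lra).
  pose proof Hp as [Ha _].
  assert (He : 0 < / INR N <= 1) by
    (split; [apply Rinv_0_lt_compat; lra | rewrite <- Rinv_1; apply Rinv_le_contravar; lra]).
  apply cubic_remainder_sum; auto; [apply Rmult_le_pos; [lra | apply pow_le; lra]|].
  intros x y Hx Hy.
  replace (KE * (3 * KD) ^ 3 * (/ INR N) ^ 3) with (KE * (3 * KD * / INR N) ^ 3) by ring.
  apply HKE.
  - split; [apply Rmult_le_pos; lra|].
    apply (Rmult_le_reg_r (INR N)); [lra|].
    rewrite Rmult_assoc, Rinv_l, Rmult_1_r, Rmult_1_l by lra. lra.
  - intros j Hj. split.
    + apply (weighted_avg_bound L (av N eta) (fun z => nth j hs hzero (av N eta z))); auto.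
      intros z Hz.
      apply (HKD j Hj (av N eta z) (av N eta z) 1 (Ha z Hz) (Ha z Hz)). lra.
    + apply mu_increment_small with (K := KD); auto.
Qed.

Lemma monomial_constants th hs : List.Forall C3 hs -> exists KD Ks Kp,
  0 <= KD /\ 0 <= Ks /\ 0 <= Kp /\
  (forall j, (j < length hs)%nat -> increment_bound (nth j hs hzero) KD) /\
  (forall j, (j < length hs)%nat -> controlled th (single_err th (nth j hs hzero)) Ks) /\
  (forall j l, (j < length hs)%nat -> (l < length hs)%nat ->
     controlled th (pair_err (nth j hs hzero) (nth l hs hzero)) Kp).
Proof.
  intros HF. set (n := length hs). set (hj := fun j => nth j hs hzero).
  assert (HC : forall j, (j < n)%nat -> C3 (hj j))
    by (intros j Hj; apply (proj1 (List.Forall_nth C3 hs) HF); auto).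
  destruct (uniform_constant (fun j K => increment_bound (hj j) K) n) as [KD [HKD0 HKD]].
  { intros k K K' H HK. exact (increment_bound_mono _ K K' HK H). }
  { intros k Hk. destruct (increment_bound_exists _ (HC k Hk)) as [K [_ HK]]. eauto. }
  destruct (uniform_constant (fun j K => controlled th (single_err th (hj j)) K) n)
    as [Ks [HKs0 HKs]].
  { intros k K K' H HK. exact (controlled_mono th _ K K' HK H). }
  { intros k Hk. destruct (single_err_controlled th _ (HC k Hk)) as [K [_ HK]]. eauto. }
  destruct (uniform_constant (fun j K => forall l, (l < n)%nat ->
             controlled th (pair_err (hj j) (hj l)) K) n) as [Kp [HKp0 HKp]].
  { intros k K K' H HK l Hl. exact (controlled_mono th _ K K' HK (H l Hl)). }
  { intros k Hk.
    destruct (uniform_constant (fun l K => controlled th (pair_err (hj k) (hj l)) K) n)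
      as [K [_ HK]]; eauto.
    - intros l K K' H HK. exact (controlled_mono th _ K K' HK H).
    - intros l Hl. destruct (pair_err_controlled th _ _ (HC k Hk) (HC l Hl)) as [K [_ HK]]. eauto. }
  exists KD, Ks, Kp. refine (conj HKD0 (conj HKs0 (conj HKp0 (conj HKD (conj HKs _))))).
  intros j l Hj Hl. exact (HKp j Hj l Hl).
Qed.

(* The generator converges on every monomial prod_j mu(h_j), at rate errq:
   sum the single-factor and pair errors of the identity above, each multiplied
   by a product of factors |mu(h_j)| <= KD + 1, and add the remainder. *)
Lemma monomial_bound th hs : List.Forall C3 hs -> exists K N0, 0 <= K /\ forall L N d eta,
  1 <= INR N -> N0 <= INR N -> 0 <= d -> nsum L eta = N ->
  Rabs (gen L d (fun xi => mon_eval (mu_eta L N xi) hs) eta - Lmon th (mu_eta L N eta) hs)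
  <= K * errq th L (INR N) d.
Proof.
  intros HF. set (n := length hs).
  destruct (monomial_constants th hs HF) as (KD & Ks & Kp & HKD0 & HKs0 & HKp0 & HKD & HKs & HKp).
  destruct (monomial_rest_bound th hs KD HKD0 HKD) as [KE [HKE0 HKE]].
  set (M := KD + 1). assert (HMn : 0 <= M ^ n) by (apply pow_le; unfold M; lra).
  pose proof (pos_INR n) as Hn.
  exists (INR n * (Ks * M ^ n) + INR n * (INR n * (Kp * M ^ n)) + KE), (3 * KD).
  split; [pose proof (Rmult_le_pos _ _ HKs0 HMn); pose proof (Rmult_le_pos _ _ HKp0 HMn);
          pose proof (Rmult_le_pos _ _ Hn H); nra|].
  intros L N d eta HN1 HN3 Hd Hs.
  assert (Hp : prob L (av N eta)) by (apply av_prob; auto; lra).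
  pose proof (errq_nonneg th L (INR N) d HN1 Hd) as Herr.
  assert (HFM : forall j, (j < n)%nat -> Rabs (avg L (av N eta) (nth j hs hzero)) <= M).
  { intros j Hj. pose proof Hp as [Ha _].
    assert (Rabs (avg L (av N eta) (nth j hs hzero)) <= KD); [|unfold M; lra].
    apply (weighted_avg_bound L (av N eta) (fun z => nth j hs hzero (av N eta z))); auto.
    intros z Hz. apply (HKD j Hj (av N eta z) (av N eta z) 1 (Ha z Hz) (Ha z Hz)). lra. }
  rewrite monomial_error_identity by lra. fold n.
  eapply Rle_trans; [apply Rabs_triang|]. rewrite !Rmult_plus_distr_r.
  apply Rplus_le_compat; [eapply Rle_trans; [apply Rabs_triang|]; apply Rplus_le_compat|].
  - replace (INR n * (Ks * M ^ n) * errq th L (INR N) d)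
      with (INR n * (Ks * errq th L (INR N) d * M ^ n)) by ring.
    apply rsum_abs_const. intros k Hk. rewrite Rabs_mult.
    apply Rmult_le_compat; try apply Rabs_pos.
    + apply HKs; auto.
    + apply rprod_masked_bound; [unfold M; lra | exact HFM].
  - replace (INR n * (INR n * (Kp * M ^ n)) * errq th L (INR N) d)
      with (INR n * (INR n * (Kp * errq th L (INR N) d * M ^ n))) by ring.
    apply rsum_abs_const. intros k Hk. apply rsum_abs_const. intros l Hl.
    destruct (k <? l)%nat; [|rewrite Rabs_R0; apply Rmult_le_pos; [apply Rmult_le_pos|]; auto].
    rewrite Rabs_mult. apply Rmult_le_compat; try apply Rabs_pos.
    + apply HKp; auto.
    + apply rprod_masked_bound; [unfold M; lra | exact HFM].
  - apply HKE; auto.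
Qed.

Lemma gen_linear L d (c : R) f g eta :
  gen L d (fun xi => c * f xi + g xi) eta = c * gen L d f eta + gen L d g eta.
Proof.
  change (osum L (fun x y => INR (eta x) * (d + INR (eta y))
            * (c * f (jump eta x y) + g (jump eta x y) - (c * f eta + g eta)))
          = c * osum L (fun x y => INR (eta x) * (d + INR (eta y)) * (f (jump eta x y) - f eta))
            + osum L (fun x y => INR (eta x) * (d + INR (eta y)) * (g (jump eta x y) - g eta))).
  rewrite (osum_ext L _ (fun x y =>
      INR (eta x) * (d + INR (eta y)) * (f (jump eta x y) - f eta) * c
    + INR (eta x) * (d + INR (eta y)) * (g (jump eta x y) - g eta))) by (intros; ring).
  rewrite osum_plus, osum_scal_r. ring.
Qed.

Lemma gen_const0 L d eta : gen L d (fun _ => 0) eta = 0.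
Proof.
  change (osum L (fun x y => INR (eta x) * (d + INR (eta y)) * (0 - 0)) = 0).
  rewrite (osum_ext L _ (fun _ _ => 0)) by (intros; ring). apply osum_0.
Qed.

Lemma polynomial_bound th P : List.Forall (fun m => List.Forall C3 (snd m)) P ->
  exists K N0, 0 <= K /\ forall L N d eta,
  1 <= INR N -> N0 <= INR N -> 0 <= d -> nsum L eta = N ->
  Rabs (gen L d (fun xi => H_eval (mu_eta L N xi) P) eta - LH th (mu_eta L N eta) P)
  <= K * errq th L (INR N) d.
Proof.
  induction P as [|m P IH]; intros HF.
  - exists 0, 0. split; [lra|]. intros L N d eta _ _ _ _.
    change (Rabs (gen L d (fun _ => 0) eta - 0) <= 0 * errq th L (INR N) d).
    rewrite gen_const0, Rminus_0_r, Rabs_R0. lra.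
  - inversion HF as [|? ? Hm HP]; subst.
    destruct (IH HP) as [K [N1 [HK0 HK]]].
    destruct (monomial_bound th (snd m) Hm) as [Km [N2 [HKm0 HKm]]].
    exists (Rabs (fst m) * Km + K), (Rmax N1 N2).
    split; [pose proof (Rabs_pos (fst m)); nra|].
    intros L N d eta HN1 HN Hd Hs.
    pose proof (errq_nonneg th L (INR N) d HN1 Hd).
    change (Rabs (gen L d (fun xi => fst m * mon_eval (mu_eta L N xi) (snd m)
                                     + H_eval (mu_eta L N xi) P) eta
                  - (fst m * Lmon th (mu_eta L N eta) (snd m) + LH th (mu_eta L N eta) P))
            <= (Rabs (fst m) * Km + K) * errq th L (INR N) d).
    rewrite gen_linear.
    set (Em := gen L d (fun xi => mon_eval (mu_eta L N xi) (snd m)) eta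
               - Lmon th (mu_eta L N eta) (snd m)).
    set (EP := gen L d (fun xi => H_eval (mu_eta L N xi) P) eta - LH th (mu_eta L N eta) P).
    assert (HEm : Rabs Em <= Km * errq th L (INR N) d)
      by (apply HKm; auto; eapply Rle_trans; [apply Rmax_r | exact HN]).
    assert (HEP : Rabs EP <= K * errq th L (INR N) d)
      by (apply HK; auto; eapply Rle_trans; [apply Rmax_l | exact HN]).
    replace (fst m * gen L d (fun xi => mon_eval (mu_eta L N xi) (snd m)) eta
             + gen L d (fun xi => H_eval (mu_eta L N xi) P) eta
             - (fst m * Lmon th (mu_eta L N eta) (snd m) + LH th (mu_eta L N eta) P))
      with (fst m * Em + EP) by (unfold Em, EP; ring).
    eapply Rle_trans; [apply Rabs_triang|]. rewrite Rabs_mult.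
    assert (Rabs (fst m) * Rabs Em <= Rabs (fst m) * (Km * errq th L (INR N) d))
      by (apply Rmult_le_compat_l; [apply Rabs_pos | exact HEm]).
    nra.
Qed.

Lemma nat_above (x : R) : exists k : nat, x <= INR k.
Proof. destruct (INR_archimed 1 x) as [k Hk]; [lra|]. exists k. lra. Qed.

Lemma eventually_above (u : nat -> nat) :
  (forall K : nat, exists m0 : nat, forall m, (m0 <= m)%nat -> (K <= u m)%nat) ->
  forall x, exists m0, forall m, (m0 <= m)%nat -> x <= INR (u m).
Proof.
  intros Hu x. destruct (nat_above x) as [K HK]. destruct (Hu K) as [m0 Hm0].
  exists m0. intros m Hm. eapply Rle_trans; [exact HK | apply le_INR, Hm0, Hm].
Qed.

Lemma errq_le th L N d s : 0 < s -> 1 <= INR L -> 1 <= N ->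
  Rabs (d * INR L - th) < Rmin 1 s -> (th + 1) / s <= INR L -> (th + 2) / s <= N ->
  errq th L N d <= 3 * s.
Proof.
  intros Hs HL HN Hconv HL2 HN2.
  pose proof (Rmin_l 1 s). pose proof (Rmin_r 1 s).
  assert (Hmis1 : Rabs (d * INR L - th) < 1) by lra.
  pose proof (Rabs_def2 _ _ Hmis1) as [Hup _].
  assert (HsL : th + 1 <= s * INR L).
  { replace (th + 1) with (s * ((th + 1) / s)) by (field; lra). apply Rmult_le_compat_l; lra. }
  assert (HsN : th + 2 <= s * N).
  { replace (th + 2) with (s * ((th + 2) / s)) by (field; lra). apply Rmult_le_compat_l; lra. }
  assert (Hds : d <= s) by (apply (Rmult_le_reg_r (INR L)); lra).
  assert (Hrest : (1 + d * INR L) / N <= s).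
  { apply (Rmult_le_reg_r N); [lra|]. unfold Rdiv.
    rewrite Rmult_assoc, Rinv_l, Rmult_1_r by lra. lra. }
  unfold errq. lra.
Qed.

Lemma errq_eventually_small th (d : nat -> R) (Ls Ns : nat -> nat) :
  Un_cv (fun L => d L * INR L) th ->
  (forall K : nat, exists m0 : nat, forall m, (m0 <= m)%nat -> (K <= Ls m)%nat) ->
  (forall K : nat, exists m0 : nat, forall m, (m0 <= m)%nat -> (K <= Ns m)%nat) ->
  forall t N0, 0 < t -> exists n0, forall n, (n0 <= n)%nat ->
    1 <= INR (Ns n) /\ N0 <= INR (Ns n) /\ errq th (Ls n) (INR (Ns n)) (d (Ls n)) <= t.
Proof.
  intros Hcv HLs HNs t N0 Ht.
  set (s := t / 3). assert (Hs : 0 < s) by (unfold s; lra).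
  destruct (Hcv (Rmin 1 s) ltac:(apply Rmin_pos; lra)) as [L1 HL1].
  destruct (HLs L1) as [m1 Hm1].
  destruct (eventually_above Ls HLs (Rmax 1 ((th + 1) / s))) as [m2 Hm2].
  destruct (eventually_above Ns HNs (Rmax (Rmax 1 N0) ((th + 2) / s))) as [m3 Hm3].
  exists (Nat.max m1 (Nat.max m2 m3)). intros n Hn.
  assert (HL := Hm2 n ltac:(lia)). assert (HN := Hm3 n ltac:(lia)).
  pose proof (Rmax_l 1 ((th + 1) / s)). pose proof (Rmax_r 1 ((th + 1) / s)).
  pose proof (Rmax_l (Rmax 1 N0) ((th + 2) / s)). pose proof (Rmax_r (Rmax 1 N0) ((th + 2) / s)).
  pose proof (Rmax_l 1 N0). pose proof (Rmax_r 1 N0).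
  split; [lra | split; [lra|]].
  replace t with (3 * s) by (unfold s; field).
  apply errq_le; try lra. apply (HL1 (Ls n)), Hm1. lia.
Qed.

Theorem proposition2p1 :
  forall (rho theta : R) (d : nat -> R) (P : dpoly),
    0 < rho -> 0 <= theta ->
    (forall L : nat, 0 < d L) ->
    Un_cv (fun L => d L * INR L) theta ->
    List.Forall (fun m => List.Forall C3 (snd m)) P ->
    forall (Ls Ns : nat -> nat),
      (forall K : nat, exists m0 : nat, forall m : nat, (m0 <= m)%nat -> (K <= Ls m)%nat) ->
      (forall K : nat, exists m0 : nat, forall m : nat, (m0 <= m)%nat -> (K <= Ns m)%nat) ->
      Un_cv (fun n => INR (Ns n) / INR (Ls n)) rho ->
      forall eps : R, 0 < eps ->
        exists n0 : nat, forall n : nat, (n0 <= n)%nat ->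
          forall eta : nat -> nat, nsum (Ls n) eta = Ns n ->
            Rabs (gen (Ls n) (d (Ls n))
                    (fun xi => H_eval (mu_eta (Ls n) (Ns n) xi) P) eta
                  - LH theta (mu_eta (Ls n) (Ns n) eta) P) <= eps.
Proof.
  intros rho th d P _ _ Hd Hcv HP Ls Ns HLs HNs _ eps Heps.
  destruct (polynomial_bound th P HP) as [K [N0 [HK0 HK]]].
  assert (Ht : 0 < eps / (K + 1)) by (apply Rdiv_lt_0_compat; lra).
  destruct (errq_eventually_small th d Ls Ns Hcv HLs HNs _ N0 Ht) as [n0 Hn0].
  exists n0. intros n Hn eta Hs.
  destruct (Hn0 n Hn) as (HN1 & HN0 & Herr).
  eapply Rle_trans; [apply HK; auto; left; apply Hd|].
  apply Rle_trans with (K * (eps / (K + 1))); [apply Rmult_le_compat_l; auto|].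
  replace (K * (eps / (K + 1))) with (eps * (K / (K + 1))) by (field; lra).
  rewrite <- (Rmult_1_r eps) at 2. apply Rmult_le_compat_l; [lra|].
  apply (Rmult_le_reg_r (K + 1)); [lra|]. unfold Rdiv.
  rewrite Rmult_assoc, Rinv_l by lra. lra.
Qed.
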